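(* Let $G=(V,E)$ be a finite connected graph with $|V|>2$, let $h(u)\in\mathbb{N}_0^V$ be the height process of the independent particle dropping model (at each step a site $i$ is chosen with probability $p(i)>0$ and $h$ is replaced by $T_ih$), and let $x_j(u)=h_j(u)-\max_kh_k(u)$. Then for every $u$, $$\max_jh_j(u+1)=\max_jh_j(u)\iff\#\{j\in V:x_j(u)\neq x_j(u+1)\}=1.$$
   Context: For $h\in\mathbb{N}_0^V$ and $i\in V$: $(T_ih)_i=\max\{h_k:\operatorname{dist}(k,i)\le1\}+1$ and $(T_ih)_j=h_j$ for $j\neq i$, where dist is the graph distance in $G$. *)

From mathcomp Require Import all_boot all_order all_algebra.
Set Implicit Arguments. Unset Strict Implicit. Unset Printing Implicit Defensive.

Definition simple_graph (T : finType) (e : rel T) : Prop :=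
  symmetric e /\ irreflexive e.

Definition connected_graph (T : finType) (e : rel T) : Prop :=
  forall x y : T, connect e x y.

Definition dist_le1 (T : finType) (e : rel T) (k i : T) : bool :=
  (k == i) || e k i.

Definition Tstep (T : finType) (e : rel T) (i : T) (h : T -> nat) : T -> nat :=
  fun j => if j == i then (\max_(k | dist_le1 e k i) h k).+1 else h j.

Definition maxh (T : finType) (h : T -> nat) : nat := \max_(k : T) h k.

Fixpoint heights (T : finType) (e : rel T) (h0 : T -> nat) (s : nat -> T)
    (u : nat) : T -> nat :=
  match u with
  | 0 => h0
  | u'.+1 => Tstep e (s u') (heights e h0 s u')
  end.

Definition xrel (T : finType) (h : T -> nat) (j : T) : int :=
  (h j)%:Z - (maxh h)%:Z.

From mathcomp Require Import all_boot all_order all_algebra.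
From mathcomp Require Import zify.

Set Implicit Arguments.
Unset Strict Implicit.

(* Dropping a particle at i raises h_i to one more than the maximum m over the
   closed neighbourhood of i, so the global maximum M stays put when m < M and
   becomes M + 1 when m = M.  In the first case every x_j with j <> i is
   unchanged while x_i strictly grows; in the second every x_j with j <> i
   drops by one, which moves at least |V| - 1 >= 2 coordinates. *)

Definition nbh_max (T : finType) (e : rel T) (i : T) (h : T -> nat) : nat :=
  \max_(k | dist_le1 e k i) h k.

Section DropStep.

Variables (T : finType) (e : rel T) (i : T) (h : T -> nat).

Local Notation m := (nbh_max e i h).
Local Notation h' := (Tstep e i h).

Lemma nbh_max_ge_self : h i <= m.
Proof. by apply: (leq_bigmax_cond (F := h)); rewrite /dist_le1 eqxx. Qed.

Lemma nbh_max_le_maxh : m <= maxh h.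
Proof. by apply/bigmax_leqP => k _; apply: leq_bigmax. Qed.

Lemma Tstep_self : h' i = m.+1.
Proof. by rewrite /Tstep eqxx. Qed.

Lemma Tstep_other j : j != i -> h' j = h j.
Proof. by rewrite /Tstep => /negbTE ->. Qed.

Lemma maxh_Tstep : maxh h' = maxn (maxh h) m.+1.
Proof.
rewrite /maxh (bigD1 i) //= (bigD1 i (P := xpredT)) //= Tstep_self.
rewrite (eq_bigr h) => [|k /Tstep_other //].
have := nbh_max_ge_self; lia.
Qed.

Lemma xrel_Tstep_other j :
  j != i -> (xrel h j != xrel h' j) = (maxh h' != maxh h).
Proof.
move=> /Tstep_other hj; rewrite /xrel hj.
by apply/idP/idP => /eqP neq; apply/eqP => eq; apply: neq; lia.
Qed.

Lemma maxh_Tstep_stable : m < maxh h -> maxh h' = maxh h.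
Proof. by rewrite maxh_Tstep; lia. Qed.

Lemma maxh_Tstep_raised : ~~ (m < maxh h) -> maxh h' = (maxh h).+1.
Proof. by have := nbh_max_le_maxh; rewrite maxh_Tstep; lia. Qed.

Lemma xrel_changes_stable :
  m < maxh h -> [set j | xrel h j != xrel h' j] = [set i].
Proof.
move=> lt_m; apply/setP => j; rewrite !inE.
have [->|nji] := eqVneq j i; last by rewrite xrel_Tstep_other // maxh_Tstep_stable ?eqxx.
rewrite /xrel Tstep_self maxh_Tstep_stable //.
by have := nbh_max_ge_self; apply/contraTneq; lia.
Qed.

Lemma xrel_changes_raised :
  ~~ (m < maxh h) -> [set~ i] \subset [set j | xrel h j != xrel h' j].
Proof.
move=> ge_m; apply/subsetP => j; rewrite !inE => nji.
by rewrite xrel_Tstep_other // maxh_Tstep_raised // gtn_eqF.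
Qed.

End DropStep.

(* Only [Hcard] matters: the claim is deterministic, holding for every
   sequence of chosen sites. *)
Theorem mainTheorem7 (T : finType) (e : rel T) (p : T -> rat)
  (Hsimple : simple_graph e) (Hconn : connected_graph e) (Hcard : 2 < #|T|)
  (Hp : forall i, (0 < p i)%R) (Hp1 : (\sum_(i : T) p i)%R = 1%R)
  (h0 : T -> nat) (s : nat -> T) (u : nat) :
  maxh (heights e h0 s u.+1) = maxh (heights e h0 s u) <->
  #|[set j : T | xrel (heights e h0 s u) j != xrel (heights e h0 s u.+1) j]| = 1.
Proof.
rewrite /=; set h := heights e h0 s u; set i := s u.
have [lt_m|ge_m] := boolP (nbh_max e i h < maxh h).
  by rewrite maxh_Tstep_stable // xrel_changes_stable // cards1.
rewrite maxh_Tstep_raised //; split=> [|card1]; first lia.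
have := subset_leq_card (xrel_changes_raised ge_m).
by rewrite cardsC1 card1; lia.
Qed.
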